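(* In the setting of the set-expansion estimator (fix $A\in[0,1]^{|\mathcal F|\times M}$, $\boldsymbol\beta\in[0,1]^{|\mathcal F|}$, $D=\mathrm{diag}(1,\dots,M)$, $C>0$, with $\mathcal F_0=\{\mathbf w: A\mathbf w=\boldsymbol\beta,\ \mathbf 0\le\mathbf w\le C\mathbf 1\}\ne\emptyset$; $\theta_{\min},\theta_{\max}$ the min and max of $\mathbf 1^\top AD(\mathbf w+\mathbf 1)$ over $\mathcal F_0$; random estimators $\hat A_n,\hat{\boldsymbol\beta}_n$ with entrywise maximal errors $O_p(n^{-1/2})$; $\hat m_n=\min_{\mathbf 0\le\mathbf w\le C\mathbf 1}\|\hat A_n\mathbf w-\hat{\boldsymbol\beta}_n\|_\infty$; and $\hat\theta_{n,\min}$, $\hat\theta_{n,\max}$ the min and max of $\mathbf 1^\top\hat A_nD(\mathbf w+\mathbf 1)$ over $\{\mathbf w:\|\hat A_n\mathbf w-\hat{\boldsymbol\beta}_n\|_\infty\le\hat m_n+\kappa_n/\sqrt n,\ \mathbf 0\le\mathbf w\le C\mathbf 1\}$), suppose moreover that $A$ has full column rank and that the deterministic sequence $\kappa_n>0$ is bounded (e.g. constant). Then \[\hat\theta_{n,\min}-\theta_{\min}=O_p\Big(\frac1{\sqrt n}\Big),\qquad\hat\theta_{n,\max}-\theta_{\max}=O_p\Big(\frac1{\sqrt n}\Big).\]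
   Context: In the application $A=A_x=[\mathbb{P}(R=1,F=f,Y=y\mid X=x)]_{f,y}$, $\boldsymbol\beta=\boldsymbol\beta_x=(\mathbb{P}(R=0,F=f\mid X=x))_f$ for a fixed stratum $x$, and $n$ is the stratum sample size; full column rank of $A_x$ corresponds to point identification of $\mathbb{E}[Y\mid X=x]$. $\|\cdot\|_\infty$ is the max-absolute-entry norm. *)

From HB Require Import structures.
From mathcomp Require Import all_boot all_order all_algebra.
From mathcomp Require Import all_classical all_reals all_analysis.
Set Implicit Arguments. Unset Strict Implicit. Unset Printing Implicit Defensive.
Import Order.TTheory GRing.Theory Num.Theory.
Local Open Scope classical_set_scope.
Local Open Scope ring_scope.

Section Defs.
Variable R : realType.

Definition mxinf (p q : nat) (X : 'M[R]_(p, q)) : R :=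
  \big[Num.max/0]_(i < p) \big[Num.max/0]_(j < q) `|X i j|.

Definition Dmx (m : nat) : 'M[R]_m := diag_mx (\row_(j < m) (j.+1)%:R).

Definition box (m : nat) (C : R) (w : 'cV[R]_m) : Prop :=
  forall j, 0 <= w j 0 /\ w j 0 <= C.

Definition obj (k m : nat) (A : 'M[R]_(k, m)) (w : 'cV[R]_m) : R :=
  ((const_mx 1 : 'rV[R]_k) *m A *m Dmx m *m (w + const_mx 1)) 0 0.

Definition F0 (k m : nat) (A : 'M[R]_(k, m)) (b : 'cV[R]_k) (C : R) :
  set 'cV[R]_m := [set w | A *m w = b /\ box C w].

Definition theta_min k m (A : 'M[R]_(k, m)) b C : R := inf [set obj A w | w in F0 A b C].
Definition theta_max k m (A : 'M[R]_(k, m)) b C : R := sup [set obj A w | w in F0 A b C].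

Definition mhat k m (A : 'M[R]_(k, m)) (b : 'cV[R]_k) (C : R) : R :=
  inf [set mxinf (A *m w - b) | w in box C].

(* relaxed feasible set with slack t = kappa_n / sqrt n *)
Definition Fhat k m (A : 'M[R]_(k, m)) (b : 'cV[R]_k) (C t : R) : set 'cV[R]_m :=
  [set w | mxinf (A *m w - b) <= mhat A b C + t /\ box C w].

Definition thetahat_min k m (A : 'M[R]_(k, m)) b C t : R :=
  inf [set obj A w | w in Fhat A b C t].
Definition thetahat_max k m (A : 'M[R]_(k, m)) b C t : R :=
  sup [set obj A w | w in Fhat A b C t].

Definition Op {d : measure_display} {T : measurableType d}
  (P : probability T R) (X : nat -> T -> R) (r : nat -> R) : Prop :=
  forall eps : R, 0 < eps -> exists Mb : R, exists N : nat,
    forall n, (N <= n)%N -> exists E : set T,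
      measurable E /\ (P (~` E) <= eps%:E)%E /\
      forall om, E om -> `|X n om| <= Mb * r n.

End Defs.

Definition rate (R : realType) (n : nat) : R := (Num.sqrt (n%:R : R))^-1.

From HB Require Import structures.
From mathcomp Require Import all_boot all_order all_algebra.
From mathcomp Require Import all_classical all_reals all_analysis.
From mathcomp Require Import ring lra.
Set Implicit Arguments. Unset Strict Implicit. Unset Printing Implicit Defensive.
Import Order.TTheory GRing.Theory Num.Theory.
Local Open Scope classical_set_scope.
Local Open Scope ring_scope.

(* Full column rank makes [F0] the single point [w0 = L A w0 = L b] for a left
   inverse [L] of [A], so [theta_min = theta_max = obj A w0].  For estimates
   within [dl] of [A] and [b], every point [w] of the relaxed set [Fhat] has
   residual [A w - b] of size [O(dl + t)], hence lies within [O(dl + t)] of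
   [w0], and its estimated objective differs from [obj A w0] by [O(dl + t)].
   With [dl = O_p(n^-1/2)] and [t = kappa_n / sqrt n] this is [O_p(n^-1/2)]. *)

Section InfNorm.
Variable R : realType.

Lemma mxinf_ge0 p q (X : 'M[R]_(p, q)) : 0 <= mxinf X.
Proof.
rewrite /mxinf; elim/big_ind: _ => // [x y hx hy|i _]; first by rewrite le_max hx.
by elim/big_ind: _ => // x y hx hy; rewrite le_max hx.
Qed.

Lemma mxinf_entry p q (X : 'M[R]_(p, q)) i j : `|X i j| <= mxinf X.
Proof. exact: le_trans (le_bigmax _ _ j) (le_bigmax _ _ i). Qed.

Lemma mxinf_le p q (X : 'M[R]_(p, q)) c :
  0 <= c -> (forall i j, `|X i j| <= c) -> mxinf X <= c.
Proof. by move=> c0 Xc; apply: bigmax_le => // i _; apply: bigmax_le. Qed.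

Lemma mxinfD p q (X Y : 'M[R]_(p, q)) : mxinf (X + Y) <= mxinf X + mxinf Y.
Proof.
apply: mxinf_le => [|i j]; first by rewrite addr_ge0 ?mxinf_ge0.
by rewrite mxE (le_trans (ler_normD _ _)) // lerD ?mxinf_entry.
Qed.

Lemma mxinfN p q (X : 'M[R]_(p, q)) : mxinf (- X) <= mxinf X.
Proof. by apply: mxinf_le => [|i j]; rewrite ?mxinf_ge0 // mxE normrN mxinf_entry. Qed.

Lemma mxinf_mulmx p n q (X : 'M[R]_(p, n)) (Y : 'M[R]_(n, q)) :
  mxinf (X *m Y) <= n%:R * mxinf X * mxinf Y.
Proof.
apply: mxinf_le => [|i j]; first by rewrite !mulr_ge0 ?mxinf_ge0.
rewrite mxE (le_trans (ler_norm_sum _ _ _)) //.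
apply: le_trans (_ : \sum_(l < n) mxinf X * mxinf Y <= _).
  by apply: ler_sum => l _; rewrite normrM ler_pM ?mxinf_entry.
by rewrite sumr_const card_ord -mulrA mulr_natl.
Qed.

Lemma mxinf_Dmx m : mxinf (Dmx R m) <= m%:R.
Proof.
apply: mxinf_le => // i j; rewrite /Dmx mxE.
case: eqP => [->|_]; last by rewrite mulr0n normr0.
by rewrite mulr1n mxE ger0_norm // ler_nat.
Qed.

Lemma mxinf_box m C (w : 'cV[R]_m) : 0 <= C -> box C w -> mxinf w <= C.
Proof.
move=> C0 bw; apply: mxinf_le => // i j; rewrite (ord1 j).
by have [w0 wC] := bw i; rewrite ger0_norm.
Qed.

Definition dform k m (X : 'M[R]_(k, m)) (y : 'cV[R]_m) : R :=
  ((const_mx 1 : 'rV[R]_k) *m X *m Dmx R m *m y) 0 0.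

Lemma dform_bound k m (X : 'M[R]_(k, m)) (y : 'cV[R]_m) :
  `|dform X y| <= k%:R * m%:R ^+ 3 * mxinf X * mxinf y.
Proof.
have one : mxinf (const_mx 1 : 'rV[R]_k) <= 1 by apply: mxinf_le => // i j; rewrite mxE normr1.
apply: le_trans (mxinf_entry _ 0 0) _; apply: le_trans (mxinf_mulmx _ _) _.
have [X0 y0] := (mxinf_ge0 X, mxinf_ge0 y).
have h1 : mxinf ((const_mx 1 : 'rV[R]_k) *m X) <= k%:R * mxinf X.
  by apply: le_trans (mxinf_mulmx _ _) _; rewrite ler_wpM2r // ler_piMr.
have h2 : mxinf ((const_mx 1 : 'rV[R]_k) *m X *m Dmx R m) <= m%:R * (k%:R * mxinf X) * m%:R.
  apply: le_trans (mxinf_mulmx _ _) _.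
  by rewrite ler_pM ?mulr_ge0 ?mxinf_ge0 ?mxinf_Dmx // ler_wpM2l.
apply: le_trans (_ : m%:R * (m%:R * (k%:R * mxinf X) * m%:R) * mxinf y <= _).
  by rewrite ler_wpM2r // ler_wpM2l.
by rewrite le_eqVlt; apply/orP; left; apply/eqP; ring.
Qed.

Lemma obj_sub k m (A A' : 'M[R]_(k, m)) (w w' : 'cV[R]_m) :
  obj A' w - obj A w' = dform (A' - A) (w + const_mx 1) + dform A (w - w').
Proof.
have entryB (M N : 'M[R]_1) : M 0 0 - N 0 0 = (M - N) 0 0 by rewrite !mxE.
have entryD (M N : 'M[R]_1) : M 0 0 + N 0 0 = (M + N) 0 0 by rewrite !mxE.
rewrite /obj /dform entryB entryD; congr (fun_of_matrix _ 0 0).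
rewrite !(mulmxBr, mulmxBl, mulmxDr); apply/matrixP => i j; rewrite !mxE; ring.
Qed.

End InfNorm.

Lemma inf_sup_near (R : realType) (S : set R) v r : S !=set0 ->
  (forall s, S s -> `|s - v| <= r) -> `|inf S - v| <= r /\ `|sup S - v| <= r.
Proof.
move=> S0 near; have {}near s : S s -> v - r <= s <= v + r by rewrite -ler_distl; apply: near.
have [s0 Ss0] := S0; have /andP[s0l s0u] := near _ Ss0.
have lbS : has_lbound S by exists (v - r) => s /near /andP[].
have ubS : has_ubound S by exists (v + r) => s /near /andP[].
rewrite !ler_distl; split; apply/andP; split.
- by apply: lb_le_inf => // s /near /andP[].
- exact: le_trans (ge_inf lbS Ss0) s0u.
- exact: le_trans s0l (ub_le_sup ubS Ss0).
- by apply: ge_sup => // s /near /andP[].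
Qed.

Section FullColumnRank.
Variables (R : realType) (k m : nat) (A : 'M[R]_(k, m)) (L : 'M[R]_(m, k)).
Variables (b : 'cV[R]_k) (C : R) (w0 : 'cV[R]_m).
Hypotheses (LA : L *m A = 1%:M) (Aw0 : A *m w0 = b) (bw0 : box C w0) (C0 : 0 <= C).

Lemma F0_eq : F0 A b C = [set w0].
Proof.
apply/seteqP; split=> [w [Aw _]|w ->] //=.
by rewrite -(mul1mx w) -(mul1mx w0) -LA -!mulmxA Aw Aw0.
Qed.

Lemma theta_min_eq : theta_min A b C = obj A w0.
Proof. by rewrite /theta_min F0_eq image_set1 inf1. Qed.

Lemma theta_max_eq : theta_max A b C = obj A w0.
Proof. by rewrite /theta_max F0_eq image_set1 sup1. Qed.

Definition slack_coef : R := k%:R * m%:R ^+ 3 * mxinf A * (k%:R * mxinf L).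
Definition error_coef : R := k%:R * m%:R ^+ 3 * (C + 1) + 2 * slack_coef * (m%:R * C + 1).

Variables (Ah : 'M[R]_(k, m)) (bh : 'cV[R]_k) (dl t : R).
Hypotheses (dA : mxinf (Ah - A) <= dl) (db : mxinf (bh - b) <= dl) (t0 : 0 < t).

Lemma mxinf_err_mulmx w : box C w -> mxinf ((Ah - A) *m w) <= m%:R * dl * C.
Proof.
move=> bw; apply: le_trans (mxinf_mulmx _ _) _.
by rewrite ler_pM ?mulr_ge0 ?mxinf_ge0 ?mxinf_box // ler_wpM2l.
Qed.

Lemma has_inf_residuals : has_inf [set mxinf (Ah *m w - bh) | w in box C].
Proof. by split; [exists (mxinf (Ah *m w0 - bh)), w0 | exists 0 => _ [w _ <-]; apply: mxinf_ge0]. Qed.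

Lemma mhat_le : mhat Ah bh C <= m%:R * dl * C + dl.
Proof.
apply: le_trans (_ : mxinf (Ah *m w0 - bh) <= _).
  by apply: ge_inf; [case: has_inf_residuals | exists w0].
have -> : Ah *m w0 - bh = (Ah - A) *m w0 - (bh - b).
  by rewrite mulmxBl Aw0 opprB addrA subrK.
by apply: le_trans (mxinfD _ _) _; rewrite lerD ?mxinf_err_mulmx // (le_trans (mxinfN _)).
Qed.

Lemma Fhat_neq0 : Fhat Ah bh C t !=set0.
Proof.
have [_ [w bw <-] lt_mhat] := inf_adherent t0 has_inf_residuals.
by exists w; split; rewrite ?ltW.
Qed.

Lemma Fhat_residual w : Fhat Ah bh C t w ->
  mxinf (A *m w - b) <= 2 * (m%:R * dl * C + dl) + t.
Proof.
move=> [resw bw].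
have -> : A *m w - b = (Ah *m w - bh) - (Ah - A) *m w + (bh - b).
  by rewrite mulmxBl; apply/matrixP => i j; rewrite !mxE; ring.
have := lerD (lerD resw (le_trans (mxinfN _) (mxinf_err_mulmx bw))) db.
have := mhat_le; have := mxinfD (Ah *m w - bh - (Ah - A) *m w) (bh - b).
have := mxinfD (Ah *m w - bh) (- ((Ah - A) *m w)); lra.
Qed.

Lemma Fhat_near w : Fhat Ah bh C t w ->
  mxinf (w - w0) <= k%:R * mxinf L * (2 * (m%:R * dl * C + dl) + t).
Proof.
move=> Fw; have -> : w - w0 = L *m (A *m w - b).
  by rewrite mulmxBr mulmxA LA mul1mx -Aw0 mulmxA LA mul1mx.
apply: le_trans (mxinf_mulmx _ _) _.
by rewrite ler_wpM2l ?mulr_ge0 ?mxinf_ge0 ?Fhat_residual.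
Qed.

Lemma obj_near w : Fhat Ah bh C t w ->
  `|obj Ah w - obj A w0| <= error_coef * dl + slack_coef * t.
Proof.
move=> Fw; have [_ bw] := Fw.
have cube0 : 0 <= k%:R * m%:R ^+ 3 :> R by rewrite mulr_ge0 ?exprn_ge0.
have w1 : mxinf (w + const_mx 1) <= C + 1.
  apply: le_trans (mxinfD _ _) _; rewrite lerD ?(mxinf_box C0 bw) //.
  by apply: mxinf_le => // i j; rewrite mxE normr1.
have D1 : `|dform (Ah - A) (w + const_mx 1)| <= k%:R * m%:R ^+ 3 * dl * (C + 1).
  apply: le_trans (dform_bound _ _) _.
  by rewrite ler_pM ?mulr_ge0 ?mxinf_ge0 // ler_wpM2l.
have D2 : `|dform A (w - w0)| <=
    k%:R * m%:R ^+ 3 * mxinf A * (k%:R * mxinf L * (2 * (m%:R * dl * C + dl) + t)).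
  by apply: le_trans (dform_bound _ _) _; rewrite ler_wpM2l ?mulr_ge0 ?mxinf_ge0 ?Fhat_near.
rewrite obj_sub; apply: le_trans (ler_normD _ _) _; apply: le_trans (lerD D1 D2) _.
by rewrite /error_coef /slack_coef le_eqVlt; apply/orP; left; apply/eqP; ring.
Qed.

Lemma thetahat_near :
  `|thetahat_min Ah bh C t - theta_min A b C| <= error_coef * dl + slack_coef * t /\
  `|thetahat_max Ah bh C t - theta_max A b C| <= error_coef * dl + slack_coef * t.
Proof.
rewrite theta_min_eq theta_max_eq; apply: inf_sup_near => [|_ [w Fw <-]].
  by have [w Fw] := Fhat_neq0; exists (obj Ah w), w.
exact: obj_near.
Qed.

End FullColumnRank.

Lemma measureC_setI_le (R : realType) d (T : measurableType d)
    (mu : {measure set T -> \bar R}) (E1 E2 : set T) (e1 e2 : R) :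
  measurable E1 -> measurable E2 ->
  (mu (~` E1) <= e1%:E)%E -> (mu (~` E2) <= e2%:E)%E ->
  (mu (~` (E1 `&` E2)) <= (e1 + e2)%:E)%E.
Proof.
move=> mE1 mE2 mu1 mu2; rewrite setCI EFinD.
by apply: le_trans (measureU2 _ (measurableC mE1) (measurableC mE2)) (leeD mu1 mu2).
Qed.

Lemma Op_dominated (R : realType) d (T : measurableType d) (P : probability T R)
    (X Y Z : nat -> T -> R) (r : nat -> R) (a c : R) (N0 : nat) :
  0 <= a -> (forall n, 0 <= r n) -> Op P X r -> Op P Y r ->
  (forall n om, (N0 <= n)%N -> `|Z n om| <= a * (`|X n om| + `|Y n om|) + c * r n) ->
  Op P Z r.
Proof.
move=> a0 r0 OX OY domZ eps eps0.
have eps2 : 0 < eps / 2 by rewrite divr_gt0.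
have [MX [NX OXn]] := OX _ eps2; have [MY [NY OYn]] := OY _ eps2.
exists (a * (`|MX| + `|MY|) + `|c|), (maxn N0 (maxn NX NY)) => n.
rewrite !geq_max => /and3P[n0 nX nY].
have [EX [mEX [PEX EXn]]] := OXn n nX; have [EY [mEY [PEY EYn]]] := OYn n nY.
exists (EX `&` EY); split; first exact: measurableI.
split; first by rewrite [eps in eps%:E]splitr; exact: measureC_setI_le.
have le_norm_rate M x : `|x| <= M * r n -> `|x| <= `|M| * r n.
  by move=> /le_trans; apply; rewrite ler_wpM2r ?ler_norm.
move=> om [/EXn/le_norm_rate Xn /EYn/le_norm_rate Yn].
apply: le_trans (domZ _ _ n0) _; rewrite mulrDl -mulrA lerD //.
  by rewrite ler_wpM2l // mulrDl lerD.
by rewrite ler_wpM2r ?ler_norm.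
Qed.

Theorem theorem3 (R : realType) (k m : nat)
  (A : 'M[R]_(k, m)) (b : 'cV[R]_k) (C : R)
  (d : measure_display) (T : measurableType d) (P : probability T R)
  (Ahat : nat -> T -> 'M[R]_(k, m)) (bhat : nat -> T -> 'cV[R]_k)
  (kappa : nat -> R) :
  (forall i j, 0 <= A i j <= 1) ->
  (forall i, 0 <= b i 0 <= 1) ->
  0 < C ->
  F0 A b C !=set0 ->
  Op P (fun n om => mxinf (Ahat n om - A)) (@rate R) ->
  Op P (fun n om => mxinf (bhat n om - b)) (@rate R) ->
  \rank A = m ->
  (forall n, 0 < kappa n) ->
  (exists K : R, forall n, kappa n <= K) ->
  Op P (fun n om => thetahat_min (Ahat n om) (bhat n om) C
                      (kappa n / Num.sqrt (n%:R)) - theta_min A b C) (@rate R) /\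
  Op P (fun n om => thetahat_max (Ahat n om) (bhat n om) C
                      (kappa n / Num.sqrt (n%:R)) - theta_max A b C) (@rate R).
Proof.
move=> _ _ /ltW C0 [w0 [Aw0 bw0]] OA Ob rkA kappa0 [K kappaK].
have LA : pinvmx A *m A = 1%:M by apply: mulVpmx; rewrite /row_full rkA.
pose a := error_coef A (pinvmx A) C; pose s := slack_coef A (pinvmx A).
have s0 : 0 <= s by rewrite /s /slack_coef !mulr_ge0 ?mxinf_ge0.
have a0 : 0 <= a.
  have [A0 L0] := (mxinf_ge0 A, mxinf_ge0 (pinvmx A)).
  by rewrite /a /error_coef -/s addr_ge0 // !mulr_ge0 // addr_ge0 // mulr_ge0.
have rate0 n : 0 <= rate R n by rewrite invr_ge0 sqrtr_ge0.
pose dl n om := `|mxinf (Ahat n om - A)| + `|mxinf (bhat n om - b)|.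
have near n om : (1 <= n)%N ->
  `|thetahat_min (Ahat n om) (bhat n om) C (kappa n / Num.sqrt n%:R) - theta_min A b C|
    <= a * dl n om + s * K * rate R n /\
  `|thetahat_max (Ahat n om) (bhat n om) C (kappa n / Num.sqrt n%:R) - theta_max A b C|
    <= a * dl n om + s * K * rate R n.
  move=> n1; have t0 : 0 < kappa n / Num.sqrt n%:R by rewrite divr_gt0 ?sqrtr_gt0 ?ltr0n.
  have dA : mxinf (Ahat n om - A) <= dl n om by rewrite (le_trans (ler_norm _)) ?lerDl.
  have dB : mxinf (bhat n om - b) <= dl n om by rewrite (le_trans (ler_norm _)) ?lerDr.
  have slackK : s * (kappa n / Num.sqrt n%:R) <= s * K * rate R n.
    by rewrite -mulrA ler_wpM2l // ler_wpM2r.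
  have [near_min near_max] := thetahat_near LA Aw0 bw0 C0 dA dB t0.
  by split; [apply: le_trans near_min _ | apply: le_trans near_max _]; rewrite lerD2l.
by split; apply: (Op_dominated (c := s * K) (N0 := 1) a0 rate0 OA Ob) => n om /(near n om)[].
Qed.
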